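(* With the notation of the context, let $r\ge1$, let $T^{(r)}$ be any unitary on $\mathcal H$ with $T^{(r)}(|j\rangle\otimes|0\rangle^{\otimes(2r+1)})=|\Psi^{(r)}_j\rangle$ for all $j\in[N]$ (here $|j\rangle,|0\rangle\in\mathbb C^{2N}$), let $\epsilon\ge0$ and let $\tilde T$ be a unitary with $\|\tilde T-T^{(r)}\|\le\epsilon/2$. Let $\Pi:\mathbb C^N\to\mathcal H$ be the isometry $\Pi|j\rangle=|j\rangle\otimes|0\rangle^{\otimes(2r+1)}$. Then $\big\|\Pi^\dagger\tilde T^\dagger S^{(r)}\tilde T\,\Pi-(H/d)^r\big\|\le\epsilon$; that is, $\tilde T^\dagger S^{(r)}\tilde T$ is a $(1,2rn+2r+n+2,\epsilon)$-block-encoding of $(H/d)^r$ (with $\epsilon=0$ for $\tilde T=T^{(r)}$).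
   Context: Let $N=2^n$, $[m]=\{0,\dots,m-1\}$, and $H$ an $N\times N$ Hermitian matrix with $\|H\|_{\max}=\max_{j,k}|H_{jk}|\le1$. For each $j\in[N]$ let $N(j)\subseteq[N]$ with $|N(j)|=d$, $\{k:H_{jk}\ne0\}\subseteq N(j)$, and $k\in N(j)\iff j\in N(k)$. A path of length $r$ from $j_0$ is $\mathbf j=(j_0,\dots,j_r)\in[N]^{r+1}$ with $j_{s+1}\in N(j_s)$ for all $s\in[r]$. Fix complex numbers $\sigma_{jk}$ with $|\sigma_{jk}|^2=|H_{jk}|$ and $\sigma_{jk}\overline{\sigma_{kj}}=\overline{H_{jk}}$ for all $j,k\in[N]$. $\mathcal H=(\mathbb C^{2N})^{\otimes(2r+2)}$ with basis $|a_0,\dots,a_{2r+1}\rangle$, $a_i\in[2N]$, and $$|\Psi^{(r)}_{j_0}\rangle=\frac1{\sqrt{d^r}}\sum_{\mathbf j}|j_0,\dots,j_r\rangle\otimes|j_0\rangle\bigotimes_{s\in[r]}\Big(\sigma_{j_sj_{s+1}}|j_{s+1}\rangle+\sqrt{1-|H_{j_sj_{s+1}}|}\,|j_{s+1}+N\rangle\Big)$$ (sum over paths of length $r$ from $j_0$); this is a unit vector. $S^{(r)}|a_0,\dots,a_{2r+1}\rangle=|a_{2r+1},\dots,a_0\rangle$. Block-encoding: $U$ is an $(\alpha,a,\epsilon)$-block-encoding of $A$ if $\|A-\alpha(\text{compression of }U\text{ to ancillas in }|0\rangle)\|\le\epsilon$ in spectral norm. Norms are spectral norms. *)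

From HB Require Import structures.
From mathcomp Require Import all_boot all_order all_algebra.
From mathcomp Require Import classical_sets reals.
From mathcomp Require Import complex.
Set Implicit Arguments. Unset Strict Implicit. Unset Printing Implicit Defensive.
Import Order.TTheory GRing.Theory Num.Theory.
Local Open Scope ring_scope.
Local Open Scope classical_set_scope.

Section LinAlg.
Variable R : realType.
Local Notation C := R[i].
Local Notation normc := (@ComplexField.Normc.normc R).
Local Notation "x %:C" := (real_complex R x) .

(* Finite-dimensional operators between coordinate spaces C^J -> C^I,
   indexed by arbitrary finite types (needed for tensor-product index sets). *)
Definition op (I J : finType) := I -> J -> C.

Definition vnorm (I : finType) (x : I -> C) : R :=
  Num.sqrt (\sum_i normc (x i) ^+ 2).

Definition opapply (I J : finType) (A : op I J) (x : J -> C) : I -> C :=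
  fun i => \sum_j A i j * x j.

Definition opnorm (I J : finType) (A : op I J) : R :=
  sup [set vnorm (opapply A x) | x in [set x : J -> C | vnorm x <= 1]].

Definition opmul (I J K : finType) (A : op I J) (B : op J K) : op I K :=
  fun i k => \sum_j A i j * B j k.

Definition opadj (I J : finType) (A : op I J) : op J I := fun j i => conjc (A i j).

Definition idop (I : finType) : op I I := fun i j => (i == j)%:R.

Definition unitary (I : finType) (A : op I I) : Prop :=
  opmul (opadj A) A = @idop I /\ opmul A (opadj A) = @idop I.

Definition sub_op (I J : finType) (A B : op I J) : op I J := fun i j => A i j - B i j.

Definition mxpow (m : nat) (A : 'M[C]_m) (k : nat) : 'M[C]_m :=
  iter k (fun B => A *m B) 1%:M.

Variables (N : nat).

(* basis index of H = (C^{2N})^{(x)(2r+2)} : a (2r+2)-tuple of elements of [2N] *)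
Definition Idx (r : nat) : finType := ((2 * r + 2).-tuple 'I_(N + N))%type.

Definition at_ (r : nat) (a : Idx r) (k : nat) : nat := nth 0%N [seq val x | x <- a] k.

Definition is_path (Nb : 'I_N -> {set 'I_N}) (r : nat) (j0 : 'I_N)
    (jp : (r.+1).-tuple 'I_N) : bool :=
  (nth j0 jp 0 == j0) && [forall s : 'I_r, nth j0 jp s.+1 \in Nb (nth j0 jp s)].

(* coefficient at basis index a of
   |j_0..j_r> (x) |j_0> (x) (x)_s (sigma_{j_s j_{s+1}} |j_{s+1}> + sqrt(1-|H_{j_s j_{s+1}}|) |j_{s+1}+N>) *)
Definition psi_term (H : 'M[C]_N) (sigma : 'I_N -> 'I_N -> C) (r : nat) (j0 : 'I_N)
    (jp : (r.+1).-tuple 'I_N) (a : Idx r) : C :=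
  (\prod_(i < r.+1) (at_ a i == nth j0 jp i)%:R) * (at_ a r.+1 == j0)%:R *
  \prod_(s < r)
    (let j := nth j0 jp s in let j' := nth j0 jp s.+1 in let x := at_ a (r + 2 + s) in
     if x == val j' then sigma j j'
     else if x == (N + val j')%N then (Num.sqrt (1 - normc (H j j')))%:C
     else 0).

Definition Psi (H : 'M[C]_N) (Nb : 'I_N -> {set 'I_N}) (d : nat)
    (sigma : 'I_N -> 'I_N -> C) (r : nat) (j0 : 'I_N) : Idx r -> C :=
  fun a => ((Num.sqrt (d%:R ^+ r : R))%:C)^-1 *
     \sum_(jp : (r.+1).-tuple 'I_N | is_path Nb j0 jp) psi_term H sigma j0 jp a.

Definition Pi (r : nat) : op (Idx r) 'I_N :=
  fun a j => ([seq val x | x <- a] == val j :: nseq (2 * r + 1) 0%N)%:R.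

Definition Swap (r : nat) : op (Idx r) (Idx r) :=
  fun a b => ((a : seq _) == rev b)%:R.

End LinAlg.

(* For a unitary U on H = (C^{2N})^{(x)(2r+2)} write
     sandwich Pi S U := Pi^dag U^dag S U Pi,
   where Pi : C^N -> H is the isometry |j> |-> |j>|0..0> and S reverses the
   order of the tensor factors.  The theorem combines two independent facts.

   Stability (EuclideanSpace, Operators): if Pi and S are isometries, T and
   T~ are unitary and ||T~ - T|| <= eps/2, then the two sandwiches differ by at
   most eps in operator norm.  This is a telescoping identity plus the triangle
   inequality for the Euclidean norm, itself obtained from Cauchy-Schwarz.

   Exactness (PathStates, PowersAndPaths, SwapOverlap, Registers): if
   T Pi |j> = |Psi_j>, the (j,k) entry of the sandwich of T is <Psi_j|S|Psi_k>.
   Each |Psi_j> is d^{-r/2} times a sum of product vectors indexed by the paths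
   from j, so the swapped overlap of two path terms factorises over the 2r+2
   registers.  It vanishes unless the second path is the reversal of the first,
   and then equals the product of the entries of H along the path, because
   sigma_{j'j} conj(sigma_{jj'}) = conj(H_{j'j}) = H_{jj'}.  Summing over the
   paths from j to k yields the (j,k) entry of (H/d)^r. *)

From HB Require Import structures.
From mathcomp Require Import all_boot all_order all_algebra.
From mathcomp Require Import reals boolp.
From mathcomp Require Import complex.
From mathcomp Require Import ring lra zify.
Import Order.TTheory GRing.Theory Num.Theory.
Local Open Scope ring_scope.
Set Implicit Arguments. Unset Strict Implicit. Unset Printing Implicit Defensive.

Section EuclideanSpace.
Variable R : realType.
Local Notation C := R[i].
Local Notation normc := (@ComplexField.Normc.normc R).
Local Notation "x %:C" := (real_complex R x).

Lemma normcC (z : C) : `|z| = (normc z)%:C.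
Proof. by case: z => a b; rewrite normc_def. Qed.

Lemma normc_ge0 (z : C) : 0 <= normc z.
Proof. by case: z => a b /=; rewrite sqrtr_ge0. Qed.

Lemma normc_sqr (z : C) : (normc z ^+ 2)%:C = z * conjc z.
Proof. by rewrite rmorphXn /= -normcC sqr_normc. Qed.

Lemma normc_conj (z : C) : normc (conjc z) = normc z.
Proof. by apply: (@complexI R); rewrite -!normcC normcJ. Qed.

Lemma normc_real (x : R) : normc x%:C = `|x|.
Proof. by rewrite /= expr0n /= addr0 sqrtr_sqr. Qed.

Lemma normc_sum (I : finType) (F : I -> C) :
  normc (\sum_i F i) <= \sum_i normc (F i).
Proof.
elim/big_rec2: _ => [|i y z _ Hz]; first by rewrite ComplexField.Normc.normc0.
by apply: le_trans (le_normcD _ _) _; rewrite lerD2l.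
Qed.

(* Cauchy-Schwarz for real families, from Lagrange's identity
   sum_{i,j} (a_i b_j - a_j b_i)^2 = 2 (|a|^2 |b|^2 - (a.b)^2). *)
Lemma cauchy_schwarz (I : finType) (a b : I -> R) :
  \sum_i a i * b i <= Num.sqrt (\sum_i a i ^+ 2) * Num.sqrt (\sum_i b i ^+ 2).
Proof.
set A := \sum_i a i ^+ 2; set B := \sum_i b i ^+ 2; set S := \sum_i a i * b i.
have lagrange : \sum_i \sum_j (a i * b j - a j * b i) ^+ 2 = 2%:R * (A * B - S ^+ 2).
  transitivity (\sum_i (a i ^+ 2 * B + b i ^+ 2 * A - 2%:R * (a i * b i * S))).
    apply: eq_bigr => i _.
    rewrite /A /B /S !big_distrr /= -big_split -sumrB /=.
    by apply: eq_bigr => j _; ring.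
  rewrite sumrB big_split /= -!big_distrl /= -!big_distrr /= -/A -/B -/S.
  rewrite -big_distrl /= -/S; ring.
have sq_le : S ^+ 2 <= A * B.
  have : 0 <= \sum_i \sum_j (a i * b j - a j * b i) ^+ 2.
    by apply: sumr_ge0 => i _; apply: sumr_ge0 => j _; apply: sqr_ge0.
  by rewrite lagrange pmulr_rge0 ?ltr0n // subr_ge0.
have A_ge0 : 0 <= A by apply: sumr_ge0 => i _; apply: sqr_ge0.
apply: le_trans (ler_norm S) _.
by rewrite -sqrtrM // -sqrtr_sqr ler_wsqrtr.
Qed.

Definition sqnorm (I : finType) (x : I -> C) : R := \sum_i normc (x i) ^+ 2.
Definition dotc (I : finType) (x y : I -> C) : C := \sum_i conjc (x i) * y i.

Lemma sqnorm_ge0 (I : finType) (x : I -> C) : 0 <= sqnorm x.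
Proof. by apply: sumr_ge0 => i _; apply: sqr_ge0. Qed.

Lemma vnorm_ge0 (I : finType) (x : I -> C) : 0 <= vnorm x.
Proof. exact: sqrtr_ge0. Qed.

Lemma sqr_vnorm (I : finType) (x : I -> C) : vnorm x ^+ 2 = sqnorm x.
Proof. by rewrite sqr_sqrtr // sqnorm_ge0. Qed.

Lemma sqnorm_dotc (I : finType) (x : I -> C) : (sqnorm x)%:C = dotc x x.
Proof.
rewrite /sqnorm /dotc rmorph_sum /=; apply: eq_bigr => i _.
by rewrite normc_sqr mulrC.
Qed.

Lemma normc_dotc (I : finType) (x y : I -> C) : normc (dotc x y) <= vnorm x * vnorm y.
Proof.
apply: le_trans (normc_sum _) _.
under eq_bigr do rewrite ComplexField.Normc.normcM normc_conj.
exact: cauchy_schwarz.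
Qed.

Lemma vnormD (I : finType) (x y : I -> C) :
  vnorm (fun i => x i + y i) <= vnorm x + vnorm y.
Proof.
rewrite -[X in _ <= X]ger0_norm ?addr_ge0 ?vnorm_ge0 // -sqrtr_sqr.
apply: ler_wsqrtr; rewrite sqrrD !sqr_vnorm.
apply: (@le_trans _ _ (\sum_i (normc (x i) + normc (y i)) ^+ 2)).
  apply: ler_sum => i _; rewrite ler_sqr ?nnegrE ?normc_ge0 ?addr_ge0 ?normc_ge0 //.
  exact: le_normcD.
under eq_bigr do rewrite sqrrD.
rewrite big_split big_split /= -/(sqnorm x) -/(sqnorm y) lerD2r lerD2l sumrMnl lerMn2r /=.
exact: cauchy_schwarz.
Qed.

Lemma vnormN (I : finType) (x : I -> C) : vnorm (fun i => - x i) = vnorm x.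
Proof. by rewrite /vnorm; under eq_bigr do rewrite normcN. Qed.

Lemma vnormB (I : finType) (x y : I -> C) :
  vnorm (fun i => x i - y i) <= vnorm x + vnorm y.
Proof. by apply: le_trans (vnormD _ _) _; rewrite vnormN. Qed.

Lemma vnorm0 (I : finType) : vnorm (fun i : I => 0 : C) = 0.
Proof.
rewrite /vnorm big1 ?sqrtr0 // => i _.
by rewrite ComplexField.Normc.normc0 expr0n.
Qed.

Lemma normc_le_vnorm (I : finType) (x : I -> C) j : normc (x j) <= vnorm x.
Proof.
rewrite -[normc (x j)]ger0_norm ?normc_ge0 // -sqrtr_sqr ler_wsqrtr //.
by rewrite (bigD1 j) //= lerDl sumr_ge0 // => i _; apply: sqr_ge0.
Qed.

Lemma vnorm_le_sum (I : finType) (y : I -> C) : vnorm y <= \sum_i normc (y i).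
Proof.
rewrite -[X in _ <= X]ger0_norm ?sumr_ge0 // => [|i _]; last exact: normc_ge0.
rewrite -sqrtr_sqr ler_wsqrtr // expr2 big_distrl /=.
apply: ler_sum => i _; rewrite big_distrr /= (bigD1 i) //= expr2 lerDl.
by apply: sumr_ge0 => j _; rewrite mulr_ge0 ?normc_ge0.
Qed.

End EuclideanSpace.

Section Operators.
Variable R : realType.
Local Notation C := R[i].
Local Notation normc := (@ComplexField.Normc.normc R).

Lemma opapply_mul (I J K : finType) (A : op R I J) (B : op R J K) x :
  opapply (opmul A B) x = opapply A (opapply B x).
Proof.
apply: funext => i; rewrite /opapply /opmul.
under eq_bigr do rewrite big_distrl /=.
rewrite exchange_big /=; apply: eq_bigr => j _.
by rewrite big_distrr /=; apply: eq_bigr => k _; rewrite mulrA.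
Qed.

Lemma opapply_sub (I J : finType) (A B : op R I J) x :
  opapply (sub_op A B) x = fun i => opapply A x i - opapply B x i.
Proof.
apply: funext => i; rewrite /opapply /sub_op -sumrB.
by apply: eq_bigr => j _; rewrite mulrBl.
Qed.

Lemma opapplyB (I J : finType) (A : op R I J) x y :
  opapply A (fun j => x j - y j) = fun i => opapply A x i - opapply A y i.
Proof.
apply: funext => i; rewrite /opapply -sumrB.
by apply: eq_bigr => j _; rewrite mulrBr.
Qed.

Lemma opapply_id (I : finType) (x : I -> C) : opapply (@idop R I) x = x.
Proof.
apply: funext => i; rewrite /opapply /idop (bigD1 i) //= eqxx mul1r big1 ?addr0 //.
by move=> j /negPf; rewrite eq_sym => ->; rewrite mul0r.
Qed.

Lemma opapply_cancel (I J : finType) (A : op R I J) (B : op R J I) x :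
  opmul A B = @idop R I -> opapply A (opapply B x) = x.
Proof. by move=> AB; rewrite -opapply_mul AB opapply_id. Qed.

Lemma opadjK (I J : finType) (A : op R I J) : opadj (opadj A) = A.
Proof. by apply: funext => i; apply: funext => j; rewrite /opadj conjcK. Qed.

Lemma dotc_adj (I J : finType) (A : op R I J) x y :
  dotc (opapply A x) y = dotc x (opapply (opadj A) y).
Proof.
rewrite /dotc /opapply /opadj.
under eq_bigr do rewrite rmorph_sum /= big_distrl /=.
rewrite exchange_big /=; apply: eq_bigr => j _.
rewrite big_distrr /=; apply: eq_bigr => i _.
by rewrite rmorphM /= -!mulrA [_ * (_ * y i)]mulrC -!mulrA [y i * _]mulrC.
Qed.

Lemma isometry_vnorm (I J : finType) (A : op R I J) x :
  opmul (opadj A) A = @idop R J -> vnorm (opapply A x) = vnorm x.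
Proof.
move=> isoA; rewrite /vnorm -!/(sqnorm _); congr Num.sqrt; apply: (@complexI R).
by rewrite !sqnorm_dotc dotc_adj -opapply_mul isoA opapply_id.
Qed.

(* ... and a co-isometry (A A^dag = 1) does not increase it:
   ||Ax||^2 = <x, A^dag A x> <= ||x|| ||A^dag (A x)|| = ||x|| ||A x||. *)
Lemma coisometry_vnorm (I J : finType) (A : op R I J) x :
  opmul A (opadj A) = @idop R I -> vnorm (opapply A x) <= vnorm x.
Proof.
move=> coisoA.
have adj_iso : vnorm (opapply (opadj A) (opapply A x)) = vnorm (opapply A x).
  by apply: isometry_vnorm; rewrite opadjK.
have sq_le : vnorm (opapply A x) ^+ 2 <= vnorm x * vnorm (opapply A x).
  rewrite sqr_vnorm -[sqnorm _]ger0_norm ?sqnorm_ge0 // -normc_real sqnorm_dotc.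
  by rewrite dotc_adj -adj_iso; exact: normc_dotc.
have [->|nz] := eqVneq (vnorm (opapply A x)) 0; first by rewrite vnorm_ge0.
have gt0 : 0 < vnorm (opapply A x) by rewrite lt_def nz vnorm_ge0.
by move: sq_le; rewrite expr2 ler_pM2r.
Qed.

Lemma opnorm_ge (I J : finType) (A : op R I J) x :
  vnorm x <= 1 -> vnorm (opapply A x) <= opnorm A.
Proof.
move=> x_le1; apply: ub_le_sup; last by exists x.
exists (\sum_i \sum_j normc (A i j)) => _ [y y_le1 <-].
apply: le_trans (vnorm_le_sum _) _; apply: ler_sum => i _.
apply: le_trans (normc_sum _) _; apply: ler_sum => j _.
rewrite ComplexField.Normc.normcM -[X in _ <= X]mulr1 ler_wpM2l ?normc_ge0 //.
exact: le_trans (normc_le_vnorm _ _) y_le1.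
Qed.

Lemma opnorm_le (I J : finType) (A : op R I J) c :
  (forall x, vnorm x <= 1 -> vnorm (opapply A x) <= c) -> opnorm A <= c.
Proof.
move=> bound; apply: ge_sup; last by move=> _ [y y_le1 <-]; apply: bound.
by exists (vnorm (opapply A (fun _ => 0))); exists (fun _ => 0); rewrite /= ?vnorm0.
Qed.

Definition sandwich (I J : finType) (P : op R I J) (S U : op R I I) : op R J J :=
  opmul (opadj P) (opmul (opadj U) (opmul S (opmul U P))).

Lemma sandwich_sub_apply (I J : finType) (P : op R I J) (S T Tt : op R I I) x :
  unitary T -> opmul (opadj Tt) Tt = @idop R I ->
  let v := opapply P x in
  let z := opapply (opadj T) (opapply S (opapply T v)) in
  opapply (sub_op (sandwich P S Tt) (sandwich P S T)) x =
  opapply (opadj P) (fun i =>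
     opapply (opadj Tt) (opapply S (opapply (sub_op Tt T) v)) i
     - opapply (opadj Tt) (opapply (sub_op Tt T) z) i).
Proof.
move=> [_ T_coiso] Tt_iso v z.
rewrite opapply_sub /sandwich !opapply_mul -/v -opapplyB.
congr opapply; apply: funext => k.
rewrite !opapply_sub opapplyB (opapplyB (opadj Tt)) opapplyB.
rewrite (opapply_cancel _ T_coiso) (opapply_cancel _ Tt_iso) /z; ring.
Qed.

Lemma sandwich_perturbation (I J : finType) (P : op R I J) (S T Tt : op R I I) eps :
  opmul (opadj P) P = @idop R J -> opmul (opadj S) S = @idop R I ->
  unitary T -> unitary Tt -> opnorm (sub_op Tt T) <= eps / 2 ->
  opnorm (sub_op (sandwich P S Tt) (sandwich P S T)) <= eps.
Proof.
move=> P_iso S_iso T_unit [Tt_iso Tt_coiso] close; apply: opnorm_le => x x_le1.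
have [T_iso T_coiso] := T_unit.
set v := opapply P x; set z := opapply (opadj T) (opapply S (opapply T v)).
have v_le1 : vnorm v <= 1 by rewrite /v isometry_vnorm.
have z_le1 : vnorm z <= 1.
  by rewrite /z isometry_vnorm ?opadjK // !isometry_vnorm.
have Ttadj_iso : opmul (opadj (opadj Tt)) (opadj Tt) = @idop R I by rewrite opadjK.
rewrite sandwich_sub_apply // -/v -/z.
apply: le_trans (coisometry_vnorm _ _) _; first by rewrite opadjK.
apply: le_trans (vnormB _ _) _.
rewrite !(isometry_vnorm _ Ttadj_iso) (isometry_vnorm _ S_iso).
have dv := le_trans (opnorm_ge (sub_op Tt T) v_le1) close.
have dz := le_trans (opnorm_ge (sub_op Tt T) z_le1) close.
lra.
Qed.

End Operators.

Lemma sum_tuple_prod (V : comPzRingType) (m : nat) (T : finType) (F : nat -> T -> V) :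
  \sum_(a : m.-tuple T) \prod_(p < m) F p (tnth a p) =
  \prod_(p < m) \sum_(x : T) F p x.
Proof.
rewrite bigA_distr_bigA /= (reindex (@finfun_of_tuple T m)) /=; last first.
  by exists tuple_of_finfun => x _; [exact: finfun_of_tupleK | exact: tuple_of_finfunK].
by apply: eq_bigr => a _; apply: eq_bigr => p _; rewrite ffunE.
Qed.

Lemma sum_delta_l (V : pzRingType) (M : nat) (f : nat -> V) (v : nat) : (v < M)%N ->
  \sum_(x < M) (val x == v)%:R * f x = f v.
Proof.
move=> lt_vM; rewrite (bigD1 (Ordinal lt_vM)) //= eqxx mul1r big1 ?addr0 // => x ne_x.
suff /negPf -> : val x != v by rewrite mul0r.
by apply: contra ne_x => /eqP eq_xv; apply/eqP/val_inj.
Qed.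

Lemma sum_delta_r (V : pzRingType) (M : nat) (f : nat -> V) (v : nat) : (v < M)%N ->
  \sum_(x < M) f x * (val x == v)%:R = f v.
Proof.
move=> lt_vM; rewrite -(sum_delta_l f lt_vM).
by apply: eq_bigr => x _; rewrite mulr_natl mulr_natr.
Qed.

Lemma at_tnth (N r : nat) (a : Idx N r) (p : 'I_(2 * r + 2)) :
  at_ a p = tnth a p.
Proof. by rewrite /at_ (nth_map (tnth a p)) ?size_tuple // -tnth_nth. Qed.

Lemma at_rev (N r : nat) (a : Idx N r) (p : nat) : (p < 2 * r + 2)%N ->
  at_ (rev_tuple a) p = at_ a (2 * r + 2 - p.+1).
Proof. by move=> lt_p; rewrite /at_ /= map_rev nth_rev ?size_map ?size_tuple. Qed.

Section PathStates.
Variable R : realType.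
Local Notation C := R[i].
Local Notation normc := (@ComplexField.Normc.normc R).
Local Notation "x %:C" := (real_complex R x).
Variables (N : nat) (H : 'M[C]_N) (sigma : 'I_N -> 'I_N -> C) (r : nat).
Local Notation path := ((r.+1).-tuple 'I_N).
Local Notation reg := (2 * r + 2)%N.

Definition hop_amp (j0 : 'I_N) (jp : path) (s x : nat) : C :=
  let j := nth j0 jp s in let j' := nth j0 jp s.+1 in
  if x == val j' then sigma j j'
  else if x == (N + val j')%N then (Num.sqrt (1 - normc (H j j')))%:C else 0.

(* amplitude of register p of the path term: the path itself on registers
   0..r, the start j0 on register r+1, and the hops on registers r+2..2r+1 *)
Definition reg_amp (j0 : 'I_N) (jp : path) (p x : nat) : C :=
  if (p < r.+1)%N then (x == nth j0 jp p)%:R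
  else if p == r.+1 then (x == j0)%:R else hop_amp j0 jp (p - r.+2) x.

Lemma psi_term_prod j0 jp (a : Idx N r) :
  psi_term H sigma j0 jp a = \prod_(p < reg) reg_amp j0 jp p (at_ a p).
Proof.
rewrite -(big_mkord xpredT (fun p => reg_amp j0 jp p (at_ a p))).
rewrite (big_cat_nat _ (n := r.+1)) //=; last by lia.
rewrite (big_cat_nat _ (m := r.+1) (n := r.+2)) //=; last by lia.
rewrite big_nat1 -{1}(add0n r.+2) big_addn big_mkord.
rewrite (_ : (reg - r.+2)%N = r); last by lia.
rewrite big_mkord /psi_term mulrA; congr (_ * _ * _).
- by apply: eq_bigr => i _; rewrite /reg_amp ltn_ord.
- by rewrite /reg_amp ltnn eqxx.
- apply: eq_bigr => s _; rewrite /reg_amp.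
  have -> : (s + r.+2 < r.+1)%N = false by lia.
  have -> : (s + r.+2 == r.+1)%N = false by lia.
  by rewrite addnK (_ : (r + 2 + s = s + r.+2)%N) //; lia.
Qed.

(* overlap on register p between the path term of jp and the path term of kp
   after the swap, which sends register p to register 2r+1-p *)
Definition reg_overlap (j : 'I_N) (jp : path) (k : 'I_N) (kp : path) (p : nat) : C :=
  \sum_(x : 'I_(N + N)) conjc (reg_amp j jp p x) * reg_amp k kp (reg - p.+1) x.

Lemma overlap_prod j jp k kp :
  \sum_(a : Idx N r) conjc (psi_term H sigma j jp a) * psi_term H sigma k kp (rev_tuple a)
  = \prod_(p < reg) reg_overlap j jp k kp p.
Proof.
rewrite -(@sum_tuple_prod _ reg _ (fun p (x : 'I_(N + N)) =>
    conjc (reg_amp j jp p x) * reg_amp k kp (reg - p.+1) x)).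
apply: eq_bigr => a _.
rewrite !psi_term_prod rmorph_prod /= [X in _ * X](reindex_inj rev_ord_inj) /=.
rewrite -big_split /=; apply: eq_bigr => p _.
rewrite at_rev ?rev_ord_proof // !at_tnth; congr (_ * _).
by rewrite (_ : (reg - (reg - p.+1).+1)%N = p) ?at_tnth //; have := ltn_ord p; lia.
Qed.

Lemma ltn_addNN (i : 'I_N) : (i < N + N)%N.
Proof. by have := ltn_ord i; lia. Qed.

Lemma reg_overlap_walk j jp k kp (s : 'I_r) :
  reg_overlap j jp k kp s = hop_amp k kp (r - s.+1) (nth j jp s).
Proof.
rewrite /reg_overlap /reg_amp.
have -> : (s < r.+1)%N by have := ltn_ord s; lia.
have -> : (reg - s.+1 < r.+1)%N = false by have := ltn_ord s; lia.
have -> : (reg - s.+1 == r.+1)%N = false by have := ltn_ord s; lia.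
have -> : (reg - s.+1 - r.+2)%N = (r - s.+1)%N by have := ltn_ord s; lia.
by under eq_bigr do rewrite rmorph_nat; rewrite sum_delta_l ?ltn_addNN.
Qed.

Lemma reg_overlap_end j jp k kp :
  reg_overlap j jp k kp r = ((nth j jp r : nat) == k)%:R.
Proof.
rewrite /reg_overlap /reg_amp ltnSn.
have -> : (reg - r.+1 < r.+1)%N = false by lia.
have -> : (reg - r.+1 == r.+1)%N by apply/eqP; lia.
by under eq_bigr do rewrite rmorph_nat; rewrite (sum_delta_l (fun x => (x == k)%:R)) ?ltn_addNN.
Qed.

Lemma reg_overlap_start j jp k kp :
  reg_overlap j jp k kp r.+1 = ((j : nat) == nth k kp r)%:R.
Proof.
rewrite /reg_overlap /reg_amp ltnn eqxx.
have -> : (reg - r.+2 = r)%N by lia.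
rewrite ltnSn; under eq_bigr do rewrite rmorph_nat.
by rewrite (sum_delta_l (fun x => (x == nth k kp r)%:R)) ?ltn_addNN.
Qed.

Lemma reg_overlap_hop j jp k kp (s : 'I_r) :
  reg_overlap j jp k kp (s + r.+2) = conjc (hop_amp j jp s (nth k kp (r - s.+1))).
Proof.
rewrite /reg_overlap /reg_amp.
have -> : (s + r.+2 < r.+1)%N = false by lia.
have -> : (s + r.+2 == r.+1)%N = false by lia.
have -> : (reg - (s + r.+2).+1 = r - s.+1)%N by lia.
have -> : (r - s.+1 < r.+1)%N by lia.
by rewrite addnK (sum_delta_r (fun x => conjc (hop_amp j jp s x))) ?ltn_addNN.
Qed.

Lemma overlap_eval j jp k kp :
  \prod_(p < reg) reg_overlap j jp k kp p =
  (\prod_(s < r) hop_amp k kp (r - s.+1) (nth j jp s)) *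
  ((nth j jp r : nat) == k)%:R * ((j : nat) == nth k kp r)%:R *
  \prod_(s < r) conjc (hop_amp j jp s (nth k kp (r - s.+1))).
Proof.
rewrite -(big_mkord xpredT (reg_overlap j jp k kp)).
rewrite (big_cat_nat _ (n := r)) //=; last by lia.
rewrite (big_cat_nat _ (m := r) (n := r.+1)) //=; last by lia.
rewrite (big_cat_nat _ (m := r.+1) (n := r.+2)) //=; last by lia.
rewrite !big_nat1 (big_addn 0 reg r.+2) !big_mkord.
rewrite (_ : (reg - r.+2)%N = r); last by lia.
rewrite reg_overlap_end reg_overlap_start !mulrA; congr (_ * _ * _ * _).
- by apply: eq_bigr => s _; rewrite reg_overlap_walk.
- by apply: eq_bigr => s _; rewrite reg_overlap_hop.
Qed.

Lemma nth_path_default (x y : 'I_N) (t : path) i : (i <= r)%N -> nth x t i = nth y t i.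
Proof. by move=> le_ir; apply: set_nth_default; rewrite size_tuple. Qed.

Lemma nth_rev_path (x : 'I_N) (t : path) i : (i <= r)%N ->
  nth x (rev_tuple t) i = nth x t (r - i).
Proof. by move=> le_ir; rewrite /= nth_rev ?size_tuple // subSS. Qed.

Lemma hop_amp_other (j0 : 'I_N) (jp : path) s (x : 'I_N) :
  (x : nat) != nth j0 jp s.+1 -> hop_amp j0 jp s x = 0.
Proof.
move=> /negPf ne_x; rewrite /hop_amp ne_x.
suff /negPf -> : (x : nat) != (N + nth j0 jp s.+1)%N by [].
by apply/negP => /eqP; have := ltn_ord x; lia.
Qed.

Lemma hop_amp_next (j0 : 'I_N) (jp : path) s (x : 'I_N) :
  (x : nat) = nth j0 jp s.+1 -> hop_amp j0 jp s x = sigma (nth j0 jp s) (nth j0 jp s.+1).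
Proof. by move=> eq_x; rewrite /hop_amp eq_x eqxx. Qed.

Lemma rev_path (Nb : 'I_N -> {set 'I_N}) (Nb_sym : forall j k, (k \in Nb j) = (j \in Nb k))
    (j k : 'I_N) (jp : path) : is_path Nb j jp -> nth j jp r = k -> is_path Nb k (rev_tuple jp).
Proof.
move=> /andP [_ /forallP steps] end_k; apply/andP; split.
  by rewrite nth_rev_path // subn0 (nth_path_default k j) // end_k.
apply/forallP => s; have lt_sr := ltn_ord s.
rewrite !nth_rev_path //; last exact: ltnW.
have lt_t : (r - s.+1 < r)%N by lia.
have := steps (Ordinal lt_t); rewrite /= Nb_sym (_ : (r - s.+1).+1 = r - s)%N; last by lia.
by rewrite !(nth_path_default k j) //; lia.
Qed.

Lemma eq_rev_path (j k : 'I_N) (jp kp : path) : nth j jp 0 = j -> (j : nat) = nth k kp r ->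
  (forall s : 'I_r, (nth k kp (r - s.+1) : nat) = nth j jp s.+1) -> kp = rev_tuple jp.
Proof.
move=> start last_j steps; apply: val_inj => /=.
apply: (@eq_from_nth _ j); first by rewrite size_rev !size_tuple.
move=> i; rewrite size_tuple => lt_ir.
rewrite -[rev jp]/(tval (rev_tuple jp)) nth_rev_path // (nth_path_default j k) //.
have [->|ne_ir] := eqVneq i r.
  by rewrite subnn start; apply: val_inj.
have lt_t : (r - i.+1 < r)%N by lia.
have := steps (Ordinal lt_t); rewrite /= (_ : (r - (r - i.+1).+1 = i)%N); last by lia.
by rewrite (_ : (r - i.+1).+1 = r - i)%N; [move=> /val_inj -> | lia].
Qed.

Lemma hop_overlap_other (j k : 'I_N) (jp kp : path) : nth j jp 0 = j -> kp != rev_tuple jp ->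
  ((j : nat) == nth k kp r)%:R * \prod_(s < r) conjc (hop_amp j jp s (nth k kp (r - s.+1))) = 0.
Proof.
move=> start ne_rev.
case: eqP => [last_j|_]; last by rewrite mul0r.
have [steps|/forallPn [s ne_s]] :=
  boolP [forall s : 'I_r, (nth k kp (r - s.+1) : nat) == nth j jp s.+1].
  by move: ne_rev; rewrite (eq_rev_path start last_j (fun s => eqP (forallP steps s))) eqxx.
by rewrite (bigD1 s) //= hop_amp_other // rmorph0 mul0r mulr0.
Qed.

(* ... while for the reversal each hop contributes
   sigma_{j' j} conj(sigma_{j j'}) = conj(H_{j' j}) = H_{j j'} *)
Lemma hop_overlap_rev
    (sigma_H : forall j k, sigma j k * conjc (sigma k j) = conjc (H j k))
    (H_herm : forall j k, H j k = conjc (H k j)) (j k : 'I_N) (jp : path) :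
  (\prod_(s < r) hop_amp k (rev_tuple jp) (r - s.+1) (nth j jp s)) *
  \prod_(s < r) conjc (hop_amp j jp s (nth k (rev_tuple jp) (r - s.+1)))
  = \prod_(s < r) H (nth j jp s) (nth j jp s.+1).
Proof.
rewrite -big_split /=; apply: eq_bigr => s _; have lt_sr := ltn_ord s.
have next : (r - s.+1).+1 = (r - s)%N by lia.
have back_s : (r - (r - s) = s)%N by lia.
have back_s1 : (r - (r - s.+1) = s.+1)%N by lia.
rewrite (hop_amp_next (x := nth j jp s)); last first.
  by rewrite next nth_rev_path ?back_s ?(nth_path_default k j) //; lia.
rewrite (hop_amp_next (x := nth k (rev_tuple jp) (r - s.+1))); last first.
  by rewrite nth_rev_path ?back_s1 ?(nth_path_default k j) //; lia.
rewrite next !nth_rev_path ?back_s ?back_s1; try lia.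
by rewrite !(nth_path_default k j) ?sigma_H -?H_herm //; lia.
Qed.

(* summing the swapped overlap over all paths kp from k keeps only the reversal
   of jp, which is a path from k exactly when jp ends at k *)
Lemma sum_rev_paths (Nb : 'I_N -> {set 'I_N})
    (Nb_sym : forall j k, (k \in Nb j) = (j \in Nb k))
    (sigma_H : forall j k, sigma j k * conjc (sigma k j) = conjc (H j k))
    (H_herm : forall j k, H j k = conjc (H k j)) (j k : 'I_N) (jp : path) :
  is_path Nb j jp ->
  \sum_(kp : path | is_path Nb k kp)
    ((\prod_(s < r) hop_amp k kp (r - s.+1) (nth j jp s)) *
     ((nth j jp r : nat) == k)%:R * ((j : nat) == nth k kp r)%:R *
     \prod_(s < r) conjc (hop_amp j jp s (nth k kp (r - s.+1))))
  = ((nth j jp r : nat) == k)%:R * \prod_(s < r) H (nth j jp s) (nth j jp s.+1).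
Proof.
move=> jp_path; have start : nth j jp 0 = j by move: jp_path => /andP [/eqP].
case: eqP => [end_k|_]; last by rewrite mul0r big1 // => kp _; rewrite mulr0 !mul0r.
have jp_k : nth j jp r = k by apply: val_inj.
have one : true%:R = 1 :> C by [].
rewrite one mul1r; under eq_bigr do rewrite mulr1.
rewrite (bigD1 (rev_tuple jp)) ?(rev_path Nb_sym jp_path jp_k) //=.
rewrite [X in _ + X]big1 ?addr0; last first.
  by move=> kp /andP [_ ne_rev]; rewrite -mulrA hop_overlap_other // mulr0.
rewrite nth_rev_path // subnn (nth_path_default k j) // start eqxx one mulr1.
exact: hop_overlap_rev.
Qed.

End PathStates.

Section PowersAndPaths.
Variable R : realType.
Local Notation C := R[i].

Lemma mxpow_paths (N : nat) (A : 'M[C]_N) (r : nat) (x0 j k : 'I_N) :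
  mxpow A r j k =
  \sum_(jp : (r.+1).-tuple 'I_N | (nth x0 jp 0 == j) && (nth x0 jp r == k))
     \prod_(s < r) A (nth x0 jp s) (nth x0 jp s.+1).
Proof.
elim: r j k => [|r IH] j k.
  rewrite /mxpow /= mxE (reindex (fun x : 'I_N => [tuple x])) /=; last first.
    exists (fun t : 1.-tuple 'I_N => thead t) => [x _ | t _]; first by rewrite theadE.
    by rewrite [RHS]tuple_eta; apply: val_inj => /=; case: t => [[|? []]].
  under eq_bigr do rewrite big_ord0.
  have [<-|ne_jk] := eqVneq j k; first by rewrite (big_pred1 j) // => x; rewrite /= andbb.
  rewrite big_pred0 // => x /=.
  by apply/negP => /andP [/eqP -> /eqP]; apply/eqP.
rewrite /mxpow iterS -/(mxpow A r) mxE.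
under eq_bigr do rewrite (IH _ k) big_distrr /=.
rewrite (reindex_onto (fun tp : (r.+1).-tuple 'I_N => [tuple of j :: tp])
          (fun jp : (r.+2).-tuple 'I_N => [tuple of behead jp])) /=; last first.
  move=> jp /andP [/eqP start _]; apply: val_inj => /=.
  by case: jp start => [[|y t] //= _] ->.
rewrite (exchange_big_dep (fun tp : (r.+1).-tuple 'I_N => nth x0 tp r == k)) /=; last first.
  by move=> l tp _ /andP [].
apply: eq_big => tp.
  rewrite eqxx /= (_ : [tuple of behead [tuple of j :: tp]] == tp) ?andbT //.
  by apply/eqP/val_inj.
move=> end_k; rewrite (big_pred1 (nth x0 tp 0)); last first.
  by move=> l; rewrite /= end_k andbT eq_sym.
by rewrite big_ord_recl.
Qed.

Lemma mxpowZ (N : nat) (a : C) (A : 'M[C]_N) (r : nat) :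
  mxpow (a *: A) r = a ^+ r *: mxpow A r.
Proof.
elim: r => [|r IH]; first by rewrite /mxpow /= scale1r.
rewrite /mxpow !iterS -!/(mxpow _ r) IH -scalemxAr scalemxAl scalerA -exprSr.
by rewrite scalemxAl.
Qed.

Lemma paths_restrict (N : nat) (H : 'M[C]_N) (r : nat) (Nb : 'I_N -> {set 'I_N})
    (H_supp : forall j k, H j k != 0 -> k \in Nb j) (j k : 'I_N) :
  \sum_(jp : (r.+1).-tuple 'I_N | is_path Nb j jp)
     ((nth j jp r : nat) == k)%:R * \prod_(s < r) H (nth j jp s) (nth j jp s.+1)
  = \sum_(jp : (r.+1).-tuple 'I_N | (nth j jp 0 == j) && (nth j jp r == k))
     \prod_(s < r) H (nth j jp s) (nth j jp s.+1).
Proof.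
rewrite big_mkcond [RHS]big_mkcond; apply: eq_bigr => jp _; rewrite /is_path.
have [->|ne_k] := eqVneq (nth j jp r) k; last first.
  rewrite andbF (_ : (_ == _ :> nat) = false) ?mul0r; first by case: ifP.
  by apply/negP => /eqP /val_inj /eqP; apply/negP.
rewrite eqxx andbT mul1r; case: (nth j jp 0 == j) => //=.
case: (boolP [forall s : 'I_r, _]) => // /forallPn [s not_nb].
rewrite (bigD1 s) //= (_ : H _ _ = 0) ?mul0r //.
by apply/eqP; apply: contraNT not_nb; apply: H_supp.
Qed.

End PowersAndPaths.

Section SwapOverlap.
Variable R : realType.
Local Notation C := R[i].
Local Notation "x %:C" := (real_complex R x).
Variables (N : nat) (H : 'M[C]_N) (Nb : 'I_N -> {set 'I_N}) (d : nat)
  (sigma : 'I_N -> 'I_N -> C) (r : nat).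
Hypothesis H_herm : forall j k, H j k = conjc (H k j).
Hypothesis H_supp : forall j k, H j k != 0 -> k \in Nb j.
Hypothesis Nb_sym : forall j k, (k \in Nb j) = (j \in Nb k).
Hypothesis sigma_H : forall j k, sigma j k * conjc (sigma k j) = conjc (H j k).

Lemma psi_scale_sqr :
  conjc (((Num.sqrt (d%:R ^+ r : R))%:C)^-1) * ((Num.sqrt (d%:R ^+ r : R))%:C)^-1
  = ((d%:R : C)^-1) ^+ r.
Proof.
rewrite conjc_inv conjc_real -invfM -rmorphM /= -expr2 sqr_sqrtr ?exprn_ge0 ?ler0n //.
by rewrite rmorphXn /= rmorph_nat exprVn.
Qed.

Lemma psi_swap_overlap (j k : 'I_N) :
  \sum_(b : Idx N r) conjc (Psi H Nb d sigma j b) * Psi H Nb d sigma k (rev_tuple b)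
  = mxpow ((d%:R)^-1 *: H) r j k.
Proof.
rewrite mxpowZ mxE (mxpow_paths _ _ j) -psi_scale_sqr -(paths_restrict _ H_supp).
set c := ((Num.sqrt (d%:R ^+ r : R))%:C)^-1; set cc := conjc c * c.
transitivity (\sum_(b : Idx N r) \sum_(jp | is_path Nb j jp) \sum_(kp | is_path Nb k kp)
   cc * (conjc (psi_term H sigma j jp b) * psi_term H sigma k kp (rev_tuple b))).
  apply: eq_bigr => b _; rewrite /Psi -/c rmorphM rmorph_sum mulrACA big_distrl.
  rewrite big_distrr; apply: eq_bigr => jp _.
  by rewrite big_distrr big_distrr.
clearbody cc; rewrite [LHS]exchange_big /= big_distrr /=; apply: eq_bigr => jp jp_path.
rewrite exchange_big /=; under eq_bigr do rewrite -big_distrr /=.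
rewrite -big_distrr /= -(sum_rev_paths Nb_sym sigma_H H_herm k jp_path).
by congr (_ * _); apply: eq_bigr => kp _; rewrite overlap_prod overlap_eval.
Qed.

End SwapOverlap.

Section Registers.
Variable R : realType.
Local Notation C := R[i].

Lemma natr_sqr (b : bool) : (b%:R * b%:R : C) = b%:R.
Proof. by case: b; rewrite ?mul1r ?mul0r. Qed.

Lemma Pi_isometry (N r : nat) : opmul (opadj (@Pi R N r)) (@Pi R N r) = @idop R 'I_N.
Proof.
apply: funext => j; apply: funext => k; rewrite /opmul /opadj /Pi /idop.
under eq_bigr do rewrite rmorph_nat.
have [<-|ne_jk] := eqVneq j k; last first.
  apply: big1 => a _; case: eqP => [a_j|]; case: eqP => [a_k|] //; rewrite ?mul0r ?mulr0 //.
  by move: ne_jk; rewrite a_j in a_k; case: a_k => /val_inj ->; rewrite eqxx.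
under eq_bigr do rewrite natr_sqr.
have lt0 : (0 < N + N)%N by have := ltn_ord j; lia.
set s := widen_ord (leq_addr N N) j :: nseq (2 * r + 1) (Ordinal lt0).
have size_s : size s == (2 * r + 2)%N by rewrite /= size_nseq; apply/eqP; lia.
set a0 : Idx N r := Tuple size_s.
have a0E : [seq val x | x <- a0] = val j :: nseq (2 * r + 1) 0%N by rewrite /= map_nseq.
rewrite (bigD1 a0) // a0E eqxx /= big1 ?addr0 // => a ne_a.
case: eqP => // eq_a; move: ne_a; rewrite -a0E in eq_a.
by move/inj_map: eq_a => /(_ val_inj) /val_inj ->; rewrite eqxx.
Qed.

Lemma Swap_apply (N r : nat) (f : Idx N r -> C) (b : Idx N r) :
  \sum_c @Swap R N r b c * f c = f (rev_tuple b).
Proof.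
rewrite (bigD1 (rev_tuple b)) //= /Swap /= revK eqxx mul1r big1 ?addr0 // => c ne_c.
case: eqP => [b_rev|]; last by rewrite mul0r.
by move: ne_c; rewrite (_ : rev_tuple b = c) ?eqxx //; apply: val_inj; rewrite /= b_rev revK.
Qed.

Lemma Swap_isometry (N r : nat) :
  opmul (opadj (@Swap R N r)) (@Swap R N r) = @idop R (Idx N r).
Proof.
apply: funext => b; apply: funext => c; rewrite /opmul /opadj /idop.
under eq_bigr do rewrite /Swap rmorph_nat.
have [<-|ne_bc] := eqVneq b c; last first.
  apply: big1 => a _; case: eqP => [a_b|]; case: eqP => [a_c|] //; rewrite ?mul0r ?mulr0 //.
  move: ne_bc; rewrite a_b in a_c; rewrite (_ : b = c) ?eqxx //; apply: val_inj => /=.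
  by rewrite -[LHS]revK a_c revK.
under eq_bigr do rewrite natr_sqr.
rewrite (bigD1 (rev_tuple b)) //= eqxx big1 ?addr0 // => a ne_a.
case: eqP => // a_b; move: ne_a; rewrite (_ : a = rev_tuple b) ?eqxx //; exact: val_inj.
Qed.

Lemma sandwich_Psi (N : nat) (H : 'M[C]_N) (Nb : 'I_N -> {set 'I_N}) (d : nat)
    (sigma : 'I_N -> 'I_N -> C) (r : nat) (T : op R (Idx N r) (Idx N r)) :
  (forall j, opapply T (fun b => @Pi R N r b j) = Psi H Nb d sigma j) ->
  forall j k, sandwich (@Pi R N r) (@Swap R N r) T j k =
   \sum_(b : Idx N r) conjc (Psi H Nb d sigma j b) * Psi H Nb d sigma k (rev_tuple b).
Proof.
move=> T_Psi j k.
have TPi (i : 'I_N) (b : Idx N r) : \sum_e T b e * @Pi R N r e i = Psi H Nb d sigma i b.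
  by rewrite -T_Psi.
rewrite /sandwich /opmul /opadj.
under eq_bigr do under eq_bigr do under eq_bigr do rewrite TPi.
under eq_bigr do under eq_bigr do rewrite Swap_apply.
under eq_bigr do rewrite big_distrr /=.
rewrite exchange_big /=; apply: eq_bigr => b _.
rewrite -(TPi j b) rmorph_sum big_distrl /=; apply: eq_bigr => a _.
by rewrite rmorphM mulrA [conjc (T b a) * _]mulrC.
Qed.

End Registers.

Theorem mainTheorem4 (R : realType) (n d r : nat)
  (H : 'M[R[i]]_(2 ^ n))
  (Nb : 'I_(2 ^ n) -> {set 'I_(2 ^ n)})
  (sigma : 'I_(2 ^ n) -> 'I_(2 ^ n) -> R[i])
  (T Tt : op R (Idx (2 ^ n) r) (Idx (2 ^ n) r)) (eps : R) :
  (* H Hermitian with max-norm at most 1 *)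
  (forall j k, H j k = conjc (H k j)) ->
  (forall j k, ComplexField.Normc.normc (H j k) <= 1) ->
  (* neighbourhood structure *)
  (forall j, #|Nb j| = d) ->
  (forall j k, H j k != 0 -> k \in Nb j) ->
  (forall j k, (k \in Nb j) = (j \in Nb k)) ->
  (* the numbers sigma_{jk} *)
  (forall j k, ComplexField.Normc.normc (sigma j k) ^+ 2 = ComplexField.Normc.normc (H j k)) ->
  (forall j k, sigma j k * conjc (sigma k j) = conjc (H j k)) ->
  (1 <= r)%N ->
  (* T^{(r)} unitary, mapping |j>|0>^{2r+1} to |Psi^{(r)}_j> *)
  unitary T ->
  (forall j, opapply T (fun b => @Pi R (2 ^ n) r b j) = @Psi R (2 ^ n) H Nb d sigma r j) ->
  0 <= eps ->
  unitary Tt ->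
  opnorm (sub_op Tt T) <= eps / 2 ->
  opnorm (sub_op (opmul (opadj (@Pi R (2 ^ n) r)) (opmul (opadj Tt) (opmul (@Swap R (2 ^ n) r) (opmul Tt (@Pi R (2 ^ n) r)))))
                 (fun i j => mxpow ((d%:R)^-1 *: H) r i j))
    <= eps.
Proof.
move=> H_herm _ _ H_supp Nb_sym _ sigma_H _ T_unit T_Psi _ Tt_unit close.
have exact_T : sandwich (@Pi R (2 ^ n) r) (@Swap R (2 ^ n) r) T =
               (fun i j => mxpow ((d%:R)^-1 *: H) r i j).
  apply: funext => j; apply: funext => k.
  by rewrite (sandwich_Psi T_Psi) psi_swap_overlap.
rewrite -exact_T.
exact: sandwich_perturbation (Pi_isometry R _ r) (Swap_isometry R _ r) T_unit Tt_unit close.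
Qed.
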